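(* Let $P = \langle X \mid R\rangle$ be a countably generated recursive presentation and $A$ a recursively enumerable set of integers. For each $i \in \mathbb{N}$ the set $T^{A}_{i} := \{ w \in X^{*} \mid \overline{w} \in \mathrm{Tor}^{A}_{i}(\overline{P})\}$ is recursively enumerable, uniformly in $i$ and in the presentation $P$. Moreover, the union $T^{A}_{\omega} := \bigcup_{i} T^{A}_{i}$ is recursively enumerable and equals $\{ w \in X^{*} \mid \overline{w} \in \mathrm{Tor}^{A}_{\omega}(\overline{P})\}$.
   Context: A countably generated recursive presentation $\langle X \mid R\rangle$ is a group presentation where $X$ is a recursively enumerated set of generators and $R$ is a recursive enumeration of relators. $\overline{P}$ denotes the group presented by $P$, $X^{*}$ the set of finite words on $X \cup X^{-1}$, and $\overline{w}$ the element represented by $w$. For a group $G$ and set of integers $A$: $\mathrm{Tor}^{A}(G) := \{ g \in G \mid \exists n \in A \text{ with } g^{n} = e\}$; $\mathrm{Tor}^{A}_{0}(G) := \{e\}$, $\mathrm{Tor}^{A}_{n+1}(G) := \langle\langle \{ g \in G \mid g\,\mathrm{Tor}^{A}_{n}(G) \in \mathrm{Tor}^{A}(G/\mathrm{Tor}^{A}_{n}(G))\} \rangle\rangle^{G}$ (normal closure in $G$), and $\mathrm{Tor}^{A}_{\omega}(G) := \bigcup_{n \in \mathbb{N}} \mathrm{Tor}^{A}_{n}(G)$. *)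

From mathcomp Require Import all_boot ssralg ssrnum ssrint.
Set Implicit Arguments. Unset Strict Implicit. Unset Printing Implicit Defensive.

Inductive pr : Type :=
| PZero
| PSucc
| PProj (i : nat)
| POracle (j : nat)
| PComp (f : pr) (gs : seq pr)
| PRec (f g : pr).

Fixpoint pr_eval (os : seq (nat -> nat)) (t : pr) (xs : seq nat) {struct t} : nat :=
  match t with
  | PZero => 0
  | PSucc => (head 0 xs).+1
  | PProj i => nth 0 xs i
  | POracle j => nth (fun _ => 0) os j (head 0 xs)
  | PComp f gs => pr_eval os f (map (fun g => pr_eval os g xs) gs)
  | PRec f g =>
      let ys := behead xs in
      (fix loop (k : nat) : nat :=
         match k with
         | 0 => pr_eval os f ys
         | k'.+1 => pr_eval os g [:: k', loop k' & ys]
         end) (head 0 xs)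
  end.

Definition computable_fun (f : nat -> nat) : Prop :=
  exists t : pr, forall n, pr_eval [::] t [:: n] = f n.

Definition re_int_set (A : int -> Prop) : Prop :=
  exists t : pr, forall z : int, A z <-> exists k, pr_eval [::] t [:: k; pickle z] != 0.

Section GroupDefs.
Variables (T : Type) (eqv : T -> T -> Prop) (mul : T -> T -> T) (inv : T -> T) (one : T).

Definition gpow (g : T) (n : int) : T :=
  match n with
  | Posz k => iter k (mul g) one
  | Negz k => inv (iter k.+1 (mul g) one)
  end.

Definition normal_subgroup (N : T -> Prop) : Prop :=
  [/\ (forall g h, eqv g h -> N g -> N h),
      N one,
      (forall g h, N g -> N h -> N (mul g h)),
      (forall g, N g -> N (inv g)) &
      (forall g h, N g -> N (mul (mul (inv h) g) h))].

Definition normal_closure (S : T -> Prop) (g : T) : Prop :=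
  forall N, normal_subgroup N -> (forall x, S x -> N x) -> N g.

Definition TorA (A : int -> Prop) (g : T) : Prop :=
  exists n, A n /\ eqv (gpow g n) one.

(* Tor^A_n(G); g Tor_n is in Tor^A(G/Tor_n) iff some a in A has g^a in Tor_n *)
Fixpoint TorAn (A : int -> Prop) (n : nat) : T -> Prop :=
  match n with
  | 0 => fun g => eqv g one
  | n'.+1 => normal_closure (fun g => exists a, A a /\ TorAn A n' (gpow g a))
  end.

Definition TorAomega (A : int -> Prop) (g : T) : Prop := exists n, TorAn A n g.

End GroupDefs.

(* a letter (x, true) is the generator x, (x, false) is x^-1 *)
Definition letter := (nat * bool)%type.
Definition word := seq letter.

Definition winv (w : word) : word := rev (map (fun l => (l.1, ~~ l.2)) w).

(* A countably generated presentation, given by enumerations: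
   X = {x | exists k, fX k = x.+1},  R = {r | exists k, fR k = (pickle r).+1}.
   (value 0 = "nothing enumerated at this step", so X, R may be empty) *)
Definition gens (fX : nat -> nat) (x : nat) : Prop := exists k, fX k = x.+1.
Definition rels (fR : nat -> nat) (r : word) : Prop := exists k, fR k = (pickle r).+1.

Definition word_over (fX : nat -> nat) (w : word) : Prop :=
  forall l, l \in w -> gens fX l.1.

Definition wf_presentation (fX fR : nat -> nat) : Prop :=
  forall r, rels fR r -> word_over fX r.

Inductive pres_eq (fR : nat -> nat) : word -> word -> Prop :=
| pe_refl w : pres_eq fR w w
| pe_sym u v : pres_eq fR u v -> pres_eq fR v u
| pe_trans u v w : pres_eq fR u v -> pres_eq fR v w -> pres_eq fR u w
| pe_free u v x b : pres_eq fR (u ++ (x, b) :: (x, ~~ b) :: v) (u ++ v)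
| pe_rel u v r : rels fR r -> pres_eq fR (u ++ r ++ v) (u ++ v).

Definition TA (fX fR : nat -> nat) (A : int -> Prop) (i : nat) (w : word) : Prop :=
  word_over fX w /\ TorAn (pres_eq fR) cat winv [::] A i w.

Definition TAomega_set (fX fR : nat -> nat) (A : int -> Prop) (w : word) : Prop :=
  word_over fX w /\ TorAomega (pres_eq fR) cat winv [::] A w.

From mathcomp Require Import all_boot ssralg ssrnum ssrint.
From mathcomp Require Import zify.
Set Implicit Arguments. Unset Strict Implicit. Unset Printing Implicit Defensive.

(* Tor^A_{l+1} is a normal closure, so its elements are exactly the words obtained from the
   empty word by free and relator insertions and deletions and by right multiplication with
   conjugates c^-1 s c of words s with s^a in Tor^A_l for some a in A (the relation Der).
   A derivation is a finite list of rule instances whose premises occur earlier in the list,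
   and checking that a number codes such a list is primitive recursive relative to the
   enumerations of X, R and A. So T^A_i is the projection of one primitive recursive
   relation, uniformly in i and in the presentation; when X and R are enumerated by programs
   these replace the oracles, and T^A_omega is the projection with i quantified as well. *)

(** * Primitive recursive functions relative to oracles *)

Definition oracle (j : nat) (os : seq (nat -> nat)) : nat -> nat := nth (fun _ => 0) os j.

Definition prfun n (f : seq (nat -> nat) -> seq nat -> nat) :=
  exists t, forall os xs, size xs = n -> pr_eval os t xs = f os xs.

Definition prvec n (g : seq (nat -> nat) -> seq nat -> seq nat) :=
  exists ts, forall os xs, size xs = n -> map (fun t => pr_eval os t xs) ts = g os xs.

Lemma pr_eval_rec os f g xs :
  pr_eval os (PRec f g) xs =
  iteri (head 0 xs) (fun k acc => pr_eval os g [:: k, acc & behead xs]) (pr_eval os f (behead xs)).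
Proof. by rewrite /=; elim: (head 0 xs) => //= k ->. Qed.

Lemma prfun_ext n f g :
  (forall os xs, size xs = n -> f os xs = g os xs) -> prfun n f -> prfun n g.
Proof. by move=> fg [t ht]; exists t => os xs hs; rewrite ht // fg. Qed.

Lemma prfun_proj n i : prfun n (fun _ xs => nth 0 xs i).
Proof. by exists (PProj i). Qed.

Lemma prfun_const n c : prfun n (fun _ _ => c).
Proof.
exists (iter c (fun t => PComp PSucc [:: t]) PZero) => os xs _.
by elim: c => //= c ->.
Qed.

Lemma prfun_behead n g i :
  prfun n (fun os xs => nth 0 (g xs) i.+1) -> prfun n (fun os xs => nth 0 (behead (g xs)) i).
Proof. by apply: prfun_ext => os xs _; rewrite nth_behead. Qed.

Lemma prvec_nil n : prvec n (fun _ _ => [::]).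
Proof. by exists [::]. Qed.
#[export] Hint Resolve prvec_nil : core.

Lemma prvec_cons n f g :
  prfun n f -> prvec n g -> prvec n (fun os xs => f os xs :: g os xs).
Proof. by move=> [t ht] [ts hts]; exists (t :: ts) => os xs hs /=; rewrite ht // hts. Qed.

Lemma prvec_id n : prvec n (fun _ xs => xs).
Proof.
exists (map PProj (iota 0 n)) => os xs <-.
by rewrite -map_comp; apply: mkseq_nth.
Qed.

Lemma prfun_pr_eval t n g : prvec n g -> prfun n (fun os xs => pr_eval os t (g os xs)).
Proof. by case=> ts hts; exists (PComp t ts) => os xs hs /=; rewrite hts. Qed.

Lemma prfun_comp n m f g :
  prfun m f -> prvec n g -> (forall os xs, size xs = n -> size (g os xs) = m) ->
  prfun n (fun os xs => f os (g os xs)).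
Proof.
move=> [tf hf] hg hsize; apply: prfun_ext (prfun_pr_eval tf hg) => os xs hs.
by rewrite hf // hsize.
Qed.

Lemma prfun_iteri n h f g :
  prfun n h -> prfun n f ->
  prfun n.+2 (fun os zs => g os (nth 0 zs 0) (nth 0 zs 1) (behead (behead zs))) ->
  prfun n (fun os xs => iteri (h os xs) (fun k acc => g os k acc xs) (f os xs)).
Proof.
move=> hh [tf hf] [tg hg].
have hrec : prfun n.+1 (fun os ys =>
    iteri (head 0 ys) (fun k acc => g os k acc (behead ys)) (f os (behead ys))).
  exists (PRec tf tg) => os ys hs; rewrite pr_eval_rec hf ?size_behead ?hs //.
  by elim: (head 0 ys) => //= k ->; rewrite hg //= size_behead hs.
apply: (prfun_comp (g := fun os xs => h os xs :: xs)) hrec _ _ => //=.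
  exact: prvec_cons hh (prvec_id n).
by move=> _ xs ->.
Qed.

Class PR1 (h : nat -> nat) := pr1 : prfun 1 (fun _ xs => h (nth 0 xs 0)).
Class PR2 (h : nat -> nat -> nat) := pr2 : prfun 2 (fun _ xs => h (nth 0 xs 0) (nth 0 xs 1)).
Class PR3 (h : nat -> nat -> nat -> nat) :=
  pr3 : prfun 3 (fun _ xs => h (nth 0 xs 0) (nth 0 xs 1) (nth 0 xs 2)).
Class PRo1 (h : seq (nat -> nat) -> nat -> nat) := pro1 : prfun 1 (fun os xs => h os (nth 0 xs 0)).

Lemma prfun_app1 h {H : PR1 h} n f : prfun n f -> prfun n (fun os xs => h (f os xs)).
Proof.
by move=> hf; apply: (prfun_comp (g := fun os xs => [:: f os xs]) H) => //; apply: prvec_cons.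
Qed.

Lemma prfun_appo1 h {H : PRo1 h} n f : prfun n f -> prfun n (fun os xs => h os (f os xs)).
Proof.
by move=> hf; apply: (prfun_comp (g := fun os xs => [:: f os xs]) H) => //; apply: prvec_cons.
Qed.

Lemma prfun_app2 h {H : PR2 h} n f g :
  prfun n f -> prfun n g -> prfun n (fun os xs => h (f os xs) (g os xs)).
Proof.
move=> hf hg; apply: (prfun_comp (g := fun os xs => [:: f os xs; g os xs]) H) => //.
by do !apply: prvec_cons.
Qed.

Lemma prfun_app3 h {H : PR3 h} n f g k :
  prfun n f -> prfun n g -> prfun n k -> prfun n (fun os xs => h (f os xs) (g os xs) (k os xs)).
Proof.
move=> hf hg hk; apply: (prfun_comp (g := fun os xs => [:: f os xs; g os xs; k os xs]) H) => //.
by do !apply: prvec_cons.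
Qed.

(* Truth values are coded by naturals, nonzero meaning true. *)
Definition nnot a := 1 - a.
Definition sgn a := 1 - (1 - a).
Definition nle a b := nnot (a - b).
Definition neq a b := nle a b * nle b a.
Definition nand a b := sgn (a * b).
Definition nor a b := sgn (a + b).
Definition nif c a b := sgn c * a + nnot c * b.

Definition bsum b (F : nat -> nat) := iteri b (fun j acc => acc + F j) 0.
Definition bex b F := sgn (bsum b F).
Definition ball b F := nnot (bsum b (fun j => nnot (F j))).

(* Decomposes the body of [fun os xs => e] along the instances of PR1, PR2, PR3 and PRo1;
   the arguments of the function are the leaves [nth 0 xs i], possibly under [behead]. *)
Ltac prfun_solve :=
  cbv beta;
  lazymatch goal with
  | |- prfun _ (fun _ xs => nth 0 xs _) => exact: prfun_proj
  | |- prfun _ (fun _ xs => nth 0 (behead (@?g xs)) ?i) => apply: (@prfun_behead _ g i); prfun_solve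
  | |- prfun _ (fun _ _ => ?c) => exact: prfun_const
  | |- prfun _ (fun _ _ => bex _ _) => rewrite /bex; prfun_solve
  | |- prfun _ (fun _ _ => ball _ _) => rewrite /ball; prfun_solve
  | |- prfun _ (fun _ _ => bsum _ _) => rewrite /bsum; prfun_solve
  | |- prfun _ (fun os xs => iteri (@?h os xs) (fun k acc => @?g os k acc xs) (@?f os xs)) =>
      apply: (prfun_iteri (h := h) (f := f) (g := g)); prfun_solve
  | |- prfun _ (fun os xs => ?h os (@?f os xs)) => apply: (@prfun_appo1 h _ _ f); prfun_solve
  | |- prfun _ (fun os xs => ?h (@?f os xs) (@?g os xs) (@?k os xs)) =>
      apply: (@prfun_app3 h _ _ f g k); prfun_solve
  | |- prfun _ (fun os xs => ?h (@?f os xs) (@?g os xs)) =>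
      apply: (@prfun_app2 h _ _ f g); prfun_solve
  | |- prfun _ (fun os xs => ?h (@?f os xs)) => apply: (@prfun_app1 h _ _ f); prfun_solve
  end.

#[export] Instance PR_oracle j : PRo1 (oracle j).
Proof. by exists (POracle j) => os [|x xs]. Qed.

#[export] Instance PR_succ : PR1 S.
Proof. by exists PSucc => os [|x xs]. Qed.

#[export] Instance PR_add : PR2 addn.
Proof.
apply: (prfun_ext (f := fun _ xs => iteri (nth 0 xs 1) (fun _ acc => acc.+1) (nth 0 xs 0))).
  by move=> _ xs _; elim: (nth 0 xs 1) => //= [|k ->]; rewrite ?addn0 ?addnS.
prfun_solve.
Qed.

#[export] Instance PR_mul : PR2 muln.
Proof.
apply: (prfun_ext (f := fun _ xs => iteri (nth 0 xs 1) (fun _ acc => acc + nth 0 xs 0) 0)).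
  by move=> _ xs _; elim: (nth 0 xs 1) => //= [|k ->]; rewrite ?muln0 // mulnS addnC.
prfun_solve.
Qed.

#[export] Instance PR_pred : PR1 predn.
Proof.
apply: (prfun_ext (f := fun _ xs => iteri (nth 0 xs 0) (fun k _ => k) 0)).
  by move=> _ xs _; case: (nth 0 xs 0).
prfun_solve.
Qed.

#[export] Instance PR_sub : PR2 subn.
Proof.
apply: (prfun_ext (f := fun _ xs => iteri (nth 0 xs 1) (fun _ acc => acc.-1) (nth 0 xs 0))).
  by move=> _ xs _; elim: (nth 0 xs 1) => //= [|k ->]; rewrite ?subn0 ?subnS.
prfun_solve.
Qed.

#[export] Instance PR_exp : PR2 expn.
Proof.
apply: (prfun_ext (f := fun _ xs => iteri (nth 0 xs 1) (fun _ acc => acc * nth 0 xs 0) 1)).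
  by move=> _ xs _; elim: (nth 0 xs 1) => // k /= ->; rewrite expnSr.
prfun_solve.
Qed.

#[export] Instance PR_nnot : PR1 nnot.
Proof. rewrite /PR1 /nnot; prfun_solve. Qed.
#[export] Instance PR_sgn : PR1 sgn.
Proof. rewrite /PR1 /sgn; prfun_solve. Qed.
#[export] Instance PR_nle : PR2 nle.
Proof. rewrite /PR2 /nle; prfun_solve. Qed.
#[export] Instance PR_neq : PR2 neq.
Proof. rewrite /PR2 /neq; prfun_solve. Qed.
#[export] Instance PR_nand : PR2 nand.
Proof. rewrite /PR2 /nand; prfun_solve. Qed.
#[export] Instance PR_nor : PR2 nor.
Proof. rewrite /PR2 /nor; prfun_solve. Qed.
#[export] Instance PR_nif : PR3 nif.
Proof. rewrite /PR3 /nif; prfun_solve. Qed.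

Lemma neq0_bool (b : bool) : (b != 0 :> nat) = b. Proof. by case: b. Qed.
Lemma nnotE a : nnot a = (a == 0). Proof. by case: a. Qed.
Lemma sgnE a : sgn a = (a != 0). Proof. by case: a. Qed.
Lemma nleE a b : nle a b = (a <= b). Proof. by rewrite /nle nnotE subn_eq0. Qed.
Lemma neqE a b : neq a b = (a == b).
Proof. by rewrite /neq !nleE eqn_leq; case: (a <= b); case: (b <= a). Qed.
Lemma nandE a b : nand a b = (a != 0) && (b != 0).
Proof. by rewrite /nand sgnE muln_eq0 negb_or. Qed.
Lemma norE a b : nor a b = (a != 0) || (b != 0).
Proof. by rewrite /nor sgnE addn_eq0 negb_and. Qed.
Lemma nifE c a b : nif c a b = if c != 0 then a else b.
Proof. by rewrite /nif sgnE nnotE; case: eqP => _; rewrite ?mul0n ?mul1n ?addn0. Qed.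

Lemma bsumS b F : bsum b.+1 F = bsum b F + F b. Proof. by []. Qed.

Lemma bsum_eq0 b F : bsum b F = 0 <-> forall j, j < b -> F j = 0.
Proof.
elim: b => [|b IH]; first by split => // _ j.
rewrite bsumS; split.
  move/eqP; rewrite addn_eq0 => /andP [/eqP /IH hF /eqP hb] j.
  by rewrite ltnS leq_eqVlt => /orP [/eqP -> | /hF].
by move=> hF; rewrite (proj2 IH) ?hF // => j hj; apply: hF; apply: ltnW.
Qed.

Lemma bsum_indicator b m F : (forall j, F j = (j < m) :> nat) -> bsum b F = minn b m.
Proof.
move=> hF; elim: b => [|b IH]; first by rewrite min0n.
by rewrite bsumS IH hF; case: (ltnP b m) => h /=; lia.
Qed.

Lemma bexP b F : bex b F != 0 <-> exists2 j, j < b & F j != 0.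
Proof.
rewrite /bex sgnE neq0_bool; elim: b => [|b IH]; first by split => // -[].
rewrite bsumS addn_eq0 negb_and; split.
  by case/orP => [/IH [j hj hF] | hF]; [exists j => //; apply: ltnW | exists b].
case=> j; rewrite ltnS leq_eqVlt => /orP [/eqP -> -> | hj hF]; first by rewrite orbT.
by rewrite (_ : bsum b F != 0) //; apply/IH; exists j.
Qed.

Lemma ballP b F : ball b F != 0 <-> forall j, j < b -> F j != 0.
Proof.
rewrite /ball nnotE neq0_bool; split => [/eqP /bsum_eq0 h j /h | h].
  by rewrite nnotE; case: eqP.
by apply/eqP/bsum_eq0 => j /h; rewrite nnotE; case: eqP.
Qed.

#[export] Instance PR_divn : PR2 divn.
Proof.
pose quotient c d := nif d (bsum c (fun j => nle (d * j.+1) c)) 0.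
apply: (prfun_ext (f := fun _ xs => quotient (nth 0 xs 0) (nth 0 xs 1))); last first.
  by rewrite /quotient; prfun_solve.
move=> _ xs _; rewrite /quotient nifE; case: (posnP (nth 0 xs 1)) => [-> | hd].
  by rewrite divn0.
rewrite (bsum_indicator _ (m := nth 0 xs 0 %/ nth 0 xs 1)) ?lt0n_neq0 //.
  by apply/minn_idPr; apply: leq_div.
by move=> j; rewrite nleE leq_divRL // mulnC.
Qed.

Fixpoint osubst (ts : seq pr) (t : pr) : pr :=
  match t with
  | POracle j => PComp (nth PZero ts j) [:: PProj 0]
  | PComp f gs => PComp (osubst ts f) (map (osubst ts) gs)
  | PRec f g => PRec (osubst ts f) (osubst ts g)
  | t => t
  end.

Lemma pr_nested_ind (P : pr -> Prop) :
  P PZero -> P PSucc -> (forall i, P (PProj i)) -> (forall j, P (POracle j)) ->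
  (forall f gs, P f -> foldr (fun g acc => P g /\ acc) True gs -> P (PComp f gs)) ->
  (forall f g, P f -> P g -> P (PRec f g)) ->
  forall t, P t.
Proof.
move=> h0 hS hP hO hC hR; fix IH 1 => -[| | i | j | f gs | f g].
- exact: h0.
- exact: hS.
- exact: hP.
- exact: hO.
- by apply: hC (IH f) _; elim: gs => //= g gs IHgs; split.
- exact: hR (IH f) (IH g).
Qed.

Lemma pr_eval_osubst ts os' os t xs :
  (forall j n, pr_eval os' (nth PZero ts j) [:: n] = oracle j os n) ->
  pr_eval os' (osubst ts t) xs = pr_eval os t xs.
Proof.
move=> hts; elim/pr_nested_ind: t xs => //=.
- move=> f gs IHf IHgs xs; rewrite IHf; congr (pr_eval _ f).
  by elim: gs IHgs => //= g gs IH [-> /IH ->].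
- by move=> f g IHf IHg xs; elim: (head 0 xs) => //= k ->; rewrite IHg.
Qed.

Lemma prfun_closed t n : prfun n (fun _ xs => pr_eval [::] t xs).
Proof.
exists (osubst [::] t) => os xs _; rewrite (pr_eval_osubst (os := [::])) // => j n'.
by rewrite nth_nil /oracle nth_nil.
Qed.

(** * Coding of sequences, words and integers *)

Notation code := CodeSeq.code.
Notation decode := CodeSeq.decode.

Definition consc n c := 2 ^ n * (2 * c + 1).
Definition v2 c := bsum c (fun e => neq (c %/ 2 ^ e.+1 * 2 ^ e.+1) c).
Definition tlc c := c %/ 2 ^ v2 c %/ 2.
Definition tls c j := iteri j (fun _ acc => tlc acc) c.
Definition nthc c j := v2 (tls c j).
Definition lenc c := bsum c (fun j => sgn (tls c j)).
Definition catc a b := iteri (lenc a) (fun k acc => consc (nthc a (lenc a - k.+1)) acc) b.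
Definition powc a n := iteri n (fun _ acc => catc a acc) (code [::]).
Definition pairc a b := consc a (consc b (code [::])).

#[export] Instance PR_consc : PR2 consc.
Proof. rewrite /PR2 /consc; prfun_solve. Qed.
#[export] Instance PR_v2 : PR1 v2.
Proof. rewrite /PR1 /v2; prfun_solve. Qed.
#[export] Instance PR_tlc : PR1 tlc.
Proof. rewrite /PR1 /tlc; prfun_solve. Qed.
#[export] Instance PR_tls : PR2 tls.
Proof. rewrite /PR2 /tls; prfun_solve. Qed.
#[export] Instance PR_nthc : PR2 nthc.
Proof. rewrite /PR2 /nthc; prfun_solve. Qed.
#[export] Instance PR_lenc : PR1 lenc.
Proof. rewrite /PR1 /lenc; prfun_solve. Qed.
#[export] Instance PR_catc : PR2 catc.
Proof. rewrite /PR2 /catc; prfun_solve. Qed.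
#[export] Instance PR_powc : PR2 powc.
Proof. rewrite /PR2 /powc; prfun_solve. Qed.
#[export] Instance PR_pairc : PR2 pairc.
Proof. rewrite /PR2 /pairc; prfun_solve. Qed.

Lemma consc_code n s : consc n (code s) = code (n :: s).
Proof. by rewrite /consc mul2n addn1. Qed.

Lemma pairc_code a b : pairc a b = code [:: a; b].
Proof. by rewrite /pairc !consc_code. Qed.

Lemma code_inj : injective code.
Proof. exact: can_inj CodeSeq.codeK. Qed.

Lemma v2E c : v2 c = logn 2 c.
Proof.
have [-> // | c_gt0] := posnP c.
rewrite /v2 (bsum_indicator _ (m := logn 2 c)); first exact/minn_idPr/ltnW/ltn_logl.
by move=> e; rewrite neqE -dvdn_eq pfactor_dvdn.
Qed.

Lemma logn2_code n s : logn 2 (code (n :: s)) = n.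
Proof.
rewrite -consc_code /consc lognM ?expn_gt0 ?addn1 // pfactorK //.
by rewrite logn_coprime ?addn0 // coprime2n /= mul2n odd_double.
Qed.

Lemma tlc_code s : tlc (code s) = code (behead s).
Proof.
case: s => [|n s] //; rewrite /tlc v2E logn2_code -consc_code /consc.
rewrite mulKn ?expn_gt0 // divn2 mul2n addn1.
by rewrite -[(code s).*2.+1]/(true + (code s).*2) half_bit_double.
Qed.

Lemma tls_code s j : tls (code s) j = code (drop j s).
Proof.
elim: j => [|j IH]; first by rewrite drop0.
by rewrite /tls iteriS -/(tls _ j) IH tlc_code -drop1 drop_drop.
Qed.

Lemma nthc_code s j : nthc (code s) j = nth 0 s j.
Proof.
rewrite /nthc tls_code; case: (ltnP j (size s)) => [hj | hj].
  by rewrite (drop_nth 0 hj) v2E logn2_code.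
by rewrite drop_oversize // nth_default.
Qed.

Lemma code_eq0 s : (code s == 0) = (s == [::]).
Proof. by case: s => // n s; rewrite -consc_code /consc muln_eq0 expn_eq0 addn1. Qed.

Lemma size_le_code s : size s <= code s.
Proof.
elim: s => // n s IH; rewrite -consc_code /consc /=.
by apply: leq_trans (leq_pmull _ (expn_gt0 2 n)); lia.
Qed.

Lemma lenc_code s : lenc (code s) = size s.
Proof.
rewrite /lenc (bsum_indicator _ (m := size s)); first exact/minn_idPr/size_le_code.
by move=> j; rewrite tls_code sgnE code_eq0 -size_eq0 size_drop subn_eq0 -ltnNge.
Qed.

Lemma catc_code s t : catc (code s) (code t) = code (s ++ t).
Proof.
rewrite /catc lenc_code.
suff catc_drop k : k <= size s ->
    iteri k (fun k acc => consc (nthc (code s) (size s - k.+1)) acc) (code t)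
    = code (drop (size s - k) s ++ t).
  by rewrite catc_drop // subnn drop0.
elim: k => [|k IH] hk; first by rewrite subn0 drop_size.
have lt_sk : size s - k.+1 < size s by lia.
rewrite iteriS IH ?(ltnW hk) // nthc_code consc_code -cat_cons (drop_nth 0 lt_sk).
by have -> : (size s - k.+1).+1 = size s - k by lia.
Qed.

Lemma powc_code s n : powc (code s) n = code (iter n (cat s) [::]).
Proof. by elim: n => // n IH; rewrite /powc iteriS -/(powc _ n) IH catc_code. Qed.

Lemma nthcE c j : nthc c j = nth 0 (decode c) j.
Proof. by rewrite -{1}[c]CodeSeq.decodeK nthc_code. Qed.

Lemma lencE c : lenc c = size (decode c).
Proof. by rewrite -{1}[c]CodeSeq.decodeK lenc_code. Qed.

Lemma pickle_word (w : word) :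
  pickle w = code (map (fun l => code [:: l.1; nat_of_bool l.2]) w).
Proof. by []. Qed.

Lemma pickle_inj (T : countType) : injective (@pickle T).
Proof. exact: pcan_inj pickleK. Qed.

Lemma catc_pickle (u v : word) : catc (pickle u) (pickle v) = pickle (u ++ v).
Proof. by rewrite !pickle_word catc_code map_cat. Qed.

Lemma powc_pickle (w : word) n : powc (pickle w) n = pickle (iter n (cat w) [::]).
Proof. by elim: n => // n IH; rewrite /powc iteriS -/(powc _ n) IH catc_pickle. Qed.

Definition isword c :=
  ball (lenc c) (fun j => nand (neq (lenc (nthc c j)) 2) (nle (nthc (nthc c j) 1) 1)).

Definition isfreepair c :=
  nand (neq (lenc c) 2) (nand (neq (nthc (nthc c 0) 0) (nthc (nthc c 1) 0))
                              (neq (nthc (nthc c 0) 1 + nthc (nthc c 1) 1) 1)).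

#[export] Instance PR_isword : PR1 isword.
Proof. rewrite /PR1 /isword; prfun_solve. Qed.
#[export] Instance PR_isfreepair : PR1 isfreepair.
Proof. rewrite /PR1 /isfreepair; prfun_solve. Qed.

Lemma letter_code d : size (decode d) = 2 -> nthc d 1 <= 1 ->
  code [:: nthc d 0; nat_of_bool (nthc d 1 == 1)] = d.
Proof.
rewrite !nthcE; case: (decode d) (CodeSeq.decodeK d) => [|x [|b []]] //= <- _.
by case: b => [|[]].
Qed.

Lemma iswordP c : isword c != 0 <-> exists w : word, c = pickle w.
Proof.
rewrite /isword; split => [/ballP hw | [w ->]]; last first.
  apply/ballP => j; rewrite pickle_word lenc_code size_map => hj.
  rewrite nthc_code (nth_map (0, false)) // lenc_code nthc_code nandE !neqE nleE.
  by case: (_.2).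
exists (map (fun d => (nthc d 0, nthc d 1 == 1)) (decode c)).
rewrite pickle_word -map_comp -{1}[c]CodeSeq.decodeK -{1}[decode c]map_id; congr code.
apply/esym/eq_in_map => d /(nthP 0) [j hj <-].
have := hw j; rewrite lencE nthcE => /(_ hj).
by rewrite nandE neqE nleE !neq0_bool lencE => /andP [/eqP /letter_code]; apply.
Qed.

Lemma isword_pickle (w : word) : isword (pickle w) != 0.
Proof. by apply/iswordP; exists w. Qed.

Lemma isfreepairP (w : word) :
  isfreepair (pickle w) != 0 <-> exists x b, w = [:: (x, b); (x, ~~ b)].
Proof.
rewrite /isfreepair pickle_word lenc_code size_map; split; last first.
  by case=> x [b ->]; rewrite !nthc_code /= !nandE !neqE !eqxx; case: b.
case: w => [|[x1 b1] [|[x2 b2] []]] //; rewrite !nthc_code /= !nandE !neqE !neq0_bool.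
by case/and3P => _ /eqP <-; case: b1; case: b2 => // _; exists x1; [exists true | exists false].
Qed.

Definition sint (sg mm : nat) : int := if sg != 0 then Negz mm else Posz mm.

Lemma sint_surj (a : int) : exists sg mm, a = sint sg mm.
Proof. by case: a => m; [exists 0, m | exists 1, m]. Qed.

Lemma pickle_sint sg mm : pickle (sint sg mm) = nif sg (pairc 0 (2 ^ mm)) (pairc (2 ^ mm) 0).
Proof.
have code1 : code [:: mm] = 2 ^ mm by rewrite /= muln1.
by rewrite nifE /sint !pairc_code -code1; case: (sg != 0).
Qed.

Lemma absz_sint sg mm : absz (sint sg mm) = nif sg mm.+1 mm.
Proof. by rewrite nifE /sint; case: (sg != 0). Qed.

(** * Sets generated by primitive recursive rules *)

Lemma in_map_take (f : nat -> nat) rs j p : j <= size rs ->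
  p \in map f (take j rs) <-> exists2 i, i < j & f (nth 0 rs i) = p.
Proof.
move=> hj; have size_tk : size (take j rs) = j by rewrite size_take_min; apply/minn_idPl.
split => [/(nthP (f 0)) [i] | [i hi <-]].
  by rewrite size_map size_tk => hi; rewrite (nth_map 0) ?size_tk // nth_take //; exists i.
by rewrite -(nth_take 0 hi) map_f // mem_nth ?size_tk.
Qed.

Section RuleSystem.
Variables concl prems ok : nat -> nat.

Inductive derivable : nat -> Prop :=
  Derivable r : ok r != 0 -> (forall p, p \in decode (prems r) -> derivable p) ->
    derivable (concl r).

Lemma derivable_rule r x : concl r = x -> ok r != 0 ->
  (forall p, p \in decode (prems r) -> derivable p) -> derivable x.
Proof. by move=> <-; apply: Derivable. Qed.

Definition justified (rs : seq nat) r :=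
  (ok r != 0) && all (mem (map concl rs)) (decode (prems r)).

Definition valid_cert rs := forall j, j < size rs -> justified (take j rs) (nth 0 rs j).

Lemma derivable_valid_cert rs x : valid_cert rs -> x \in map concl rs -> derivable x.
Proof.
move=> hrs; suff hj j : j < size rs -> derivable (concl (nth 0 rs j)).
  by move=> /mapP [r /(nthP 0) [j /hj + <-] ->].
elim/ltn_ind: j => j IH hj; have /andP [hok /allP hprems] := hrs j hj.
apply: Derivable hok _ => p /hprems /(in_map_take _ _ (ltnW hj)) [i hi <-].
exact/IH/(ltn_trans hi).
Qed.

Lemma justified_sub rs rs' r : {subset rs <= rs'} -> justified rs r -> justified rs' r.
Proof.
move=> sub /andP [hok /allP h]; rewrite /justified hok.
by apply/allP => p /h /mapP [q /sub hq ->]; apply: map_f.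
Qed.

Lemma valid_cert_cat rs1 rs2 : valid_cert rs1 -> valid_cert rs2 -> valid_cert (rs1 ++ rs2).
Proof.
move=> h1 h2 j; rewrite size_cat take_cat nth_cat => hj.
case: ltnP => hj1; first exact: h1.
apply: justified_sub (h2 _ _); first by move=> q; rewrite mem_cat orbC => ->.
by rewrite -(ltn_add2l (size rs1)) subnKC.
Qed.

Lemma valid_cert_rcons rs r : valid_cert rs -> justified rs r -> valid_cert (rcons rs r).
Proof.
move=> hrs hr j; rewrite size_rcons ltnS leq_eqVlt -cats1 take_cat nth_cat.
case/orP => [/eqP -> | hj]; last by rewrite hj; apply: hrs.
by rewrite ltnn subnn take0 cats0.
Qed.

Lemma valid_cert_all (ps : seq nat) :
  (forall p, p \in ps -> exists2 rs, valid_cert rs & p \in map concl rs) ->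
  exists2 rs, valid_cert rs & {subset ps <= map concl rs}.
Proof.
elim: ps => [|p ps IH] hps; first by exists [::].
have [rs1 h1 hp] := hps p (mem_head _ _).
have [rs2 h2 sub] : exists2 rs, valid_cert rs & {subset ps <= map concl rs}.
  by apply: IH => q hq; apply: hps; rewrite in_cons hq orbT.
exists (rs1 ++ rs2); first exact: valid_cert_cat.
by move=> q; rewrite in_cons map_cat mem_cat => /orP [/eqP -> | /sub ->]; rewrite ?hp ?orbT.
Qed.

Lemma valid_cert_derivable x : derivable x -> exists2 rs, valid_cert rs & x \in map concl rs.
Proof.
elim=> r hok _ IH; have [rs hrs sub] := valid_cert_all IH.
exists (rcons rs r); last by rewrite map_rcons mem_rcons mem_head.
by apply: valid_cert_rcons => //; rewrite /justified hok; apply/allP.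
Qed.

Definition certc c x :=
  nand (ball (lenc c) (fun j => nand (ok (nthc c j))
          (ball (lenc (prems (nthc c j))) (fun i =>
             bex j (fun j' => neq (concl (nthc c j')) (nthc (prems (nthc c j)) i))))))
       (bex (lenc c) (fun j => neq (concl (nthc c j)) x)).

Lemma certc_code rs x : certc (code rs) x != 0 <-> valid_cert rs /\ x \in map concl rs.
Proof.
have in_concl j p : j <= size rs ->
    bex j (fun j' => neq (concl (nthc (code rs) j')) p) != 0 <-> p \in map concl (take j rs).
  move=> hj; split => [/bexP [i hi] | /(in_map_take _ _ hj) [i hi <-]].
    by rewrite nthc_code neqE neq0_bool => /eqP eq_p; apply/(in_map_take _ _ hj); exists i.
  by apply/bexP; exists i; rewrite // nthc_code neqE eqxx.
rewrite /certc !lenc_code nandE neq0_bool; split.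
  case/andP => /ballP hv /(in_concl _ _ (leqnn _)); rewrite take_size; split => // j hj.
  have := hv j; rewrite nthc_code nandE neq0_bool => /(_ hj) /andP [hok /ballP hp].
  rewrite /justified hok; apply/(all_nthP 0) => i hi.
  by have := hp i; rewrite lencE nthcE => /(_ hi) /(in_concl _ _ (ltnW hj)).
case=> hv hx; apply/andP; split; last by apply/(in_concl _ _ (leqnn _)); rewrite take_size.
apply/ballP => j hj; rewrite nthc_code nandE neq0_bool.
have /andP [-> /(all_nthP 0) hp] := hv j hj; apply/ballP => i; rewrite lencE nthcE => hi.
exact/(in_concl _ _ (ltnW hj))/hp.
Qed.

Lemma derivable_certc x : derivable x <-> exists c, certc c x != 0.
Proof.
split => [/valid_cert_derivable [rs hrs hx] | [c]].
  by exists (code rs); apply/certc_code.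
by rewrite -[c]CodeSeq.decodeK => /certc_code [hrs]; apply: derivable_valid_cert.
Qed.

End RuleSystem.

(** * Derivations of torsion words *)

Lemma winv_cat (u v : word) : winv (u ++ v) = winv v ++ winv u.
Proof. by rewrite /winv map_cat rev_cat. Qed.

Lemma winvK : involutive winv.
Proof.
move=> u; rewrite /winv map_rev revK -map_comp -[RHS]map_id.
by apply: eq_map => -[x b] /=; rewrite negbK.
Qed.

Lemma iter_catC (s : word) n : iter n (cat s) [::] ++ s = s ++ iter n (cat s) [::].
Proof. by elim: n => [|n IH] /=; rewrite ?cats0 // -catA IH. Qed.

Lemma winv_iter_cat (s : word) n : iter n (cat (winv s)) [::] = winv (iter n (cat s) [::]).
Proof. by elim: n => // n IH; rewrite /= IH -winv_cat iter_catC. Qed.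

Section PresentedGroup.
Variable fR : nat -> nat.
Local Notation peq := (pres_eq fR).

Lemma pres_eq_ctx u v a b : peq u v -> peq (a ++ u ++ b) (a ++ v ++ b).
Proof.
elim=> {u v} [w | u v _ IH | u v w _ IH1 _ IH2 | u v x c | u v r hr].
- exact: pe_refl.
- exact: pe_sym.
- exact: pe_trans IH1 IH2.
- have := pe_free fR (a ++ u) (v ++ b) x c; by rewrite -!catA.
- have := pe_rel (a ++ u) (v ++ b) hr; by rewrite -!catA.
Qed.

Lemma pres_eq_cat u u' v v' : peq u u' -> peq v v' -> peq (u ++ v) (u' ++ v').
Proof.
move=> hu hv; apply: (pe_trans (v := u' ++ v)).
  by have := pres_eq_ctx [::] v hu.
by have := pres_eq_ctx u' [::] hv; rewrite !cats0.
Qed.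

Lemma pres_eq_mulV w : peq (w ++ winv w) [::].
Proof.
elim: w => [|[x b] w IH]; first exact: pe_refl.
rewrite -cat1s winv_cat /=; apply: (pe_trans (v := [:: (x, b); (x, ~~ b)])).
  by have := pres_eq_ctx [:: (x, b)] [:: (x, ~~ b)] IH; rewrite /= -!catA.
exact: (pe_free fR [::] [::] x b).
Qed.

Lemma pres_eq_Vmul w : peq (winv w ++ w) [::].
Proof. by have := pres_eq_mulV (winv w); rewrite winvK. Qed.

Lemma pres_eq_mul1_inv u v : peq (u ++ v) [::] -> peq u (winv v).
Proof.
move=> h; apply: (pe_trans (v := u ++ (v ++ winv v))).
  by have := pres_eq_cat (pe_refl fR u) (pe_sym (pres_eq_mulV v)); rewrite cats0.
by rewrite catA; exact: (pres_eq_cat h (pe_refl fR (winv v))).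
Qed.

Lemma pres_eq_winv u v : peq u v -> peq (winv u) (winv v).
Proof.
move=> h; apply: pres_eq_mul1_inv; apply: (pe_trans (v := winv u ++ u)).
  exact: pres_eq_cat (pe_refl fR _) (pe_sym h).
exact: pres_eq_Vmul.
Qed.

Variable A : int -> Prop.
Local Notation Tor := (TorAn peq cat winv [::] A).
Local Notation pow := (gpow cat winv [::]).

Lemma normal_closure_normal S :
  normal_subgroup peq cat winv [::] (normal_closure peq cat winv [::] S).
Proof.
split.
- by move=> g h e Hg N hN hS; case: (hN) => h1 _ _ _ _; apply: h1 e (Hg N hN hS).
- by move=> N [].
- by move=> g h Hg Hh N hN hS; case: (hN) => _ _ h3 _ _; apply: h3; [apply: Hg | apply: Hh].
- by move=> g Hg N hN hS; case: (hN) => _ _ _ h4 _; apply: h4; apply: Hg.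
- by move=> g h Hg N hN hS; case: (hN) => _ _ _ _ h5; apply: h5; apply: Hg.
Qed.

Lemma Tor_succ_normal l : normal_subgroup peq cat winv [::] (Tor l.+1).
Proof. exact: normal_closure_normal. Qed.

Lemma Tor_pres_eq l u v : peq u v -> Tor l u -> Tor l v.
Proof.
case: l => [|l] e; first exact: pe_trans (pe_sym e).
by case: (Tor_succ_normal l) => h1 _ _ _ _; apply: h1.
Qed.

Lemma Tor_winv l u : Tor l u -> Tor l (winv u).
Proof.
case: l => [|l] h; first exact: (pres_eq_winv h).
by case: (Tor_succ_normal l) => _ _ _ h4 _; apply: h4.
Qed.

Lemma Tor_nil l : Tor l [::].
Proof. by case: l => [|l]; [apply: pe_refl | case: (Tor_succ_normal l)]. Qed.

Lemma Tor_pow l s a : Tor l (pow s a) <-> Tor l (iter (absz a) (cat s) [::]).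
Proof.
case: a => [m | m] //=; split => [/Tor_winv | h]; last exact: Tor_winv.
by rewrite winvK.
Qed.

Definition elementary (m : word) := (exists x b, m = [:: (x, b); (x, ~~ b)]) \/ rels fR m.

(* In Der_conj, c' ++ c in Tor_0 makes c' the inverse of c in the group, so u is multiplied
   by a conjugate of s. *)
Inductive Der : nat -> word -> Prop :=
| Der_nil l : Der l [::]
| Der_del l p q m : elementary m -> Der l (p ++ m ++ q) -> Der l (p ++ q)
| Der_ins l p q m : elementary m -> Der l (p ++ q) -> Der l (p ++ m ++ q)
| Der_conj l u s a c' c : A a -> Der l.+1 u -> Der l (iter (absz a) (cat s) [::]) ->
    Der 0 (c' ++ c) -> Der l.+1 (u ++ c' ++ s ++ c).

Lemma pres_eq_elementary p q m : elementary m -> peq (p ++ m ++ q) (p ++ q).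
Proof. by case=> [[x [b ->]] | hr]; [apply: pe_free | apply: pe_rel]. Qed.

Lemma Der_Tor l w : Der l w -> Tor l w.
Proof.
elim=> {l w} [l | l p q m hm _ IH | l p q m hm _ IH | l u s a c' c hA _ IHu _ IHs _ IHc].
- exact: Tor_nil.
- exact: Tor_pres_eq (pres_eq_elementary p q hm) IH.
- exact: Tor_pres_eq (pe_sym (pres_eq_elementary p q hm)) IH.
- move=> N hN hS; case: (hN) => h1 _ h3 _ h5; apply: h3; first exact: IHu.
  have Ns : N s by apply: hS; exists a; split => //; apply/Tor_pow.
  apply: h1 (h5 _ c Ns); rewrite -catA; apply: pres_eq_cat (pe_refl fR _).
  exact/pe_sym/pres_eq_mul1_inv.
Qed.

Lemma Der_pres_eqP l u v : peq u v -> Der l u <-> Der l v.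
Proof.
elim=> {u v} [w | u v _ IH | u v w _ IH1 _ IH2 | u v x b | u v r hr].
- by [].
- by split => /IH.
- by split => [/IH1 /IH2 | /IH2 /IH1].
- have hm : elementary [:: (x, b); (x, ~~ b)] by left; exists x, b.
  by split; [apply: Der_del hm | apply: Der_ins hm].
- have hm : elementary r by right.
  by split; [apply: Der_del hm | apply: Der_ins hm].
Qed.

Lemma Der_pres_eq l u v : peq u v -> Der l u -> Der l v.
Proof. by move=> e; case: (Der_pres_eqP l e). Qed.

Definition conj_closed l g := forall u c, Der l.+1 u -> Der l.+1 (u ++ winv c ++ g ++ c).

Lemma conj_closed_pres_eq l g h : peq g h -> conj_closed l g -> conj_closed l h.
Proof.
move=> e hg u c /(hg _ c); apply: Der_pres_eq.
by rewrite !catA; apply: pres_eq_cat (pe_refl fR _); apply: pres_eq_cat (pe_refl fR _) e.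
Qed.

Lemma conj_closed_nil l : conj_closed l [::].
Proof.
move=> u c; apply: Der_pres_eq; apply: pe_sym.
by have := pres_eq_cat (pe_refl fR u) (pres_eq_Vmul c); rewrite cats0.
Qed.

Lemma conj_closed_cat l g h : conj_closed l g -> conj_closed l h -> conj_closed l (g ++ h).
Proof.
move=> hg hh u c /(hg _ c) /(hh _ c); apply: Der_pres_eq; rewrite -!catA.
apply: (pres_eq_cat (pe_refl fR u)); apply: (pres_eq_cat (pe_refl fR (winv c))).
apply: (pres_eq_cat (pe_refl fR g)); rewrite catA.
exact: (pres_eq_cat (pres_eq_mulV c) (pe_refl fR (h ++ c))).
Qed.

Lemma conj_closed_conj l g h : conj_closed l g -> conj_closed l ((winv h ++ g) ++ h).
Proof. by move=> hg u c /(hg _ (h ++ c)); rewrite winv_cat -!catA. Qed.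

Lemma Der_complete l w : Tor l w -> Der l w.
Proof.
elim: l w => [|l IH] w /= hw.
  exact: Der_pres_eq (pe_sym hw) (Der_nil _).
pose N g := conj_closed l g /\ conj_closed l (winv g).
have hN : normal_subgroup peq cat winv [::] N.
  split.
  - move=> g h e [hg hg']; split; first exact: conj_closed_pres_eq e hg.
    exact: conj_closed_pres_eq (pres_eq_winv e) hg'.
  - by split; apply: conj_closed_nil.
  - move=> g h [hg hg'] [hh hh']; rewrite /N winv_cat.
    by split; apply: conj_closed_cat.
  - by move=> g [hg hg']; split; rewrite ?winvK.
  - move=> g h [hg hg']; split; first exact: conj_closed_conj.
    by rewrite !winv_cat winvK catA; apply: conj_closed_conj.
have hS g : (exists a, A a /\ Tor l (pow g a)) -> N g.
  move=> [a [hA /Tor_pow hg]]; split => u c hu.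
    apply: Der_conj hA hu (IH _ hg) _.
    exact: Der_pres_eq (pe_sym (pres_eq_Vmul c)) (Der_nil _).
  apply: Der_conj hA hu _ _; first by rewrite winv_iter_cat; apply/IH/Tor_winv.
  exact: Der_pres_eq (pe_sym (pres_eq_Vmul c)) (Der_nil _).
by have := (hw N hN hS).1 [::] [::] (Der_nil _); rewrite cats0.
Qed.

End PresentedGroup.

(** * Torsion derivations as rule instances *)

Lemma decode_consc a c : decode (consc a c) = a :: decode c.
Proof. by rewrite -{1}[c]CodeSeq.decodeK consc_code CodeSeq.codeK. Qed.

Lemma pairc_pickle_inj l l' (w w' : word) :
  pairc l (pickle w) = pairc l' (pickle w') -> l = l' /\ w = w'.
Proof. by rewrite !pairc_code => /code_inj [-> /pickle_inj]. Qed.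

Definition by_kind k a0 a1 a2 a3 := nif (neq k 0) a0 (nif (neq k 1) a1 (nif (neq k 2) a2 a3)).

Lemma by_kind0 a0 a1 a2 a3 : by_kind 0 a0 a1 a2 a3 = a0.
Proof. by rewrite /by_kind !nifE !neqE. Qed.
Lemma by_kind1 a0 a1 a2 a3 : by_kind 1 a0 a1 a2 a3 = a1.
Proof. by rewrite /by_kind !nifE !neqE. Qed.
Lemma by_kind2 a0 a1 a2 a3 : by_kind 2 a0 a1 a2 a3 = a2.
Proof. by rewrite /by_kind !nifE !neqE. Qed.
Lemma by_kind3 k a0 a1 a2 a3 : by_kind k.+3 a0 a1 a2 a3 = a3.
Proof. by rewrite /by_kind !nifE !neqE. Qed.

Section TorsionRules.
Variables (fR : nat -> nat) (fA : nat -> nat -> nat) (A : int -> Prop).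
Hypothesis fA_enum : forall a, A a <-> exists k, fA k (pickle a) != 0.

(* A rule instance r has fields nthc r i: the kind (field 0) and the level l (field 1).
   Kind 0 is Der_nil. Kinds 1 and 2 delete resp. insert the elementary word m (field 4)
   between p and q (fields 2, 3); field 5 is an index k with fR k = m + 1 if m is a relator.
   Kinds >= 3 are Der_conj with u, c', s, c in fields 2 to 5, the exponent sint of fields 6
   and 7, and field 8 a witness of its membership in A. The judgement Der l w is coded as
   pairc l (pickle w). *)
Definition tor_concl r := by_kind (nthc r 0)
  (pairc (nthc r 1) (code [::]))
  (pairc (nthc r 1) (catc (nthc r 2) (nthc r 3)))
  (pairc (nthc r 1) (catc (nthc r 2) (catc (nthc r 4) (nthc r 3))))
  (pairc (nthc r 1).+1 (catc (nthc r 2) (catc (nthc r 3) (catc (nthc r 4) (nthc r 5))))).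

Definition tor_prems r := by_kind (nthc r 0)
  (code [::])
  (consc (pairc (nthc r 1) (catc (nthc r 2) (catc (nthc r 4) (nthc r 3)))) (code [::]))
  (consc (pairc (nthc r 1) (catc (nthc r 2) (nthc r 3))) (code [::]))
  (consc (pairc (nthc r 1).+1 (nthc r 2))
    (consc (pairc (nthc r 1) (powc (nthc r 4) (nif (nthc r 6) (nthc r 7).+1 (nthc r 7))))
      (consc (pairc 0 (catc (nthc r 3) (nthc r 5))) (code [::])))).

Definition elem_ok r :=
  nand (nor (isfreepair (nthc r 4)) (neq (fR (nthc r 5)) (nthc r 4).+1))
       (nand (isword (nthc r 2)) (nand (isword (nthc r 3)) (isword (nthc r 4)))).

Definition tor_ok r := by_kind (nthc r 0) 1 (elem_ok r) (elem_ok r)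
  (nand (fA (nthc r 8) (nif (nthc r 6) (pairc 0 (2 ^ nthc r 7)) (pairc (2 ^ nthc r 7) 0)))
        (nand (nand (isword (nthc r 2)) (isword (nthc r 3)))
              (nand (isword (nthc r 4)) (isword (nthc r 5))))).

Local Notation judgement l w := (pairc l (pickle w)).
Local Notation tor_derivable := (derivable tor_concl tor_prems tor_ok).

Lemma elem_okP r : elem_ok r != 0 -> exists wp wq wm : word,
  [/\ nthc r 2 = pickle wp, nthc r 3 = pickle wq, nthc r 4 = pickle wm & elementary fR wm].
Proof.
rewrite /elem_ok !nandE norE neqE !neq0_bool.
case/and4P => helem /iswordP [wp ->] /iswordP [wq ->] /iswordP [wm hm].
exists wp, wq, wm; split => //; rewrite hm in helem.
case/orP: helem => [/isfreepairP | /eqP hk]; [by left | by right; exists (nthc r 5)].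
Qed.

Lemma tor_rule_sound r : tor_ok r != 0 ->
  (forall p, p \in decode (tor_prems r) -> exists l w, p = judgement l w /\ Der fR A l w) ->
  exists l w, tor_concl r = judgement l w /\ Der fR A l w.
Proof.
move=> hok IH.
have prem l w : judgement l w \in decode (tor_prems r) -> Der fR A l w.
  by case/IH => l' [w' [/pairc_pickle_inj [-> ->]]].
move: hok prem; rewrite /tor_ok /tor_concl /tor_prems.
case: (nthc r 0) => [|[|[|k]]]; rewrite ?by_kind0 ?by_kind1 ?by_kind2 ?by_kind3.
- by move=> _ _; exists (nthc r 1), [::]; split => //; apply: Der_nil.
- move=> /elem_okP [wp [wq [wm [-> -> -> hm]]]] prem.
  exists (nthc r 1), (wp ++ wq); rewrite catc_pickle; split => //.
  by apply: Der_del hm (prem _ _ _); rewrite !catc_pickle decode_consc mem_head.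
- move=> /elem_okP [wp [wq [wm [-> -> -> hm]]]] prem.
  exists (nthc r 1), (wp ++ wm ++ wq); rewrite !catc_pickle; split => //.
  by apply: Der_ins hm (prem _ _ _); rewrite catc_pickle decode_consc mem_head.
rewrite !nandE !neq0_bool => /and3P [hA /andP [/iswordP [wu ->] /iswordP [wc' ->]]].
case/andP => /iswordP [ws ->] /iswordP [wc ->] prem.
have hAa : A (sint (nthc r 6) (nthc r 7)).
  by apply/fA_enum; exists (nthc r 8); rewrite pickle_sint.
exists (nthc r 1).+1, (wu ++ wc' ++ ws ++ wc); rewrite !catc_pickle; split => //.
apply: Der_conj hAa _ _ _; apply: prem;
  by rewrite ?powc_pickle ?catc_pickle !decode_consc ?absz_sint !inE eqxx ?orbT.
Qed.

Lemma tor_derivable_sound x : tor_derivable x -> exists l w, x = judgement l w /\ Der fR A l w.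
Proof. by elim=> r hok _; apply: tor_rule_sound. Qed.

Lemma elementary_elem_ok m : elementary fR m -> exists k, forall kind l (p q : word),
  elem_ok (code [:: kind; l; pickle p; pickle q; pickle m; k]) != 0.
Proof.
move=> hm; have [k hk] : exists k, (isfreepair (pickle m) != 0) || (fR k == (pickle m).+1).
  case: hm => [/isfreepairP hfp | [k hk]]; first by exists 0; rewrite hfp.
  by exists k; rewrite hk eqxx orbT.
exists k => kind l p q; rewrite /elem_ok !nthc_code; cbn [nth].
by rewrite !nandE norE neqE !neq0_bool hk !isword_pickle.
Qed.

Lemma Der_tor_derivable l w : Der fR A l w -> tor_derivable (judgement l w).
Proof.
elim=> {l w} [l | l p q m hm _ IH | l p q m hm _ IH | l u s a c' c hA _ IHu _ IHs _ IHc].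
- apply: (@derivable_rule _ _ _ (code [:: 0; l]));
    by rewrite /tor_concl /tor_ok /tor_prems !nthc_code; cbn [nth]; rewrite ?by_kind0.
- have [k hk] := elementary_elem_ok hm.
  apply: (@derivable_rule _ _ _ (code [:: 1; l; pickle p; pickle q; pickle m; k])).
  + by rewrite /tor_concl !nthc_code; cbn [nth]; rewrite by_kind1 catc_pickle.
  + by rewrite /tor_ok !nthc_code; cbn [nth]; rewrite by_kind1 hk.
  + rewrite /tor_prems !nthc_code; cbn [nth]; rewrite by_kind1 !catc_pickle decode_consc.
    by move=> x; rewrite inE => /eqP ->.
- have [k hk] := elementary_elem_ok hm.
  apply: (@derivable_rule _ _ _ (code [:: 2; l; pickle p; pickle q; pickle m; k])).
  + by rewrite /tor_concl !nthc_code; cbn [nth]; rewrite by_kind2 !catc_pickle.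
  + by rewrite /tor_ok !nthc_code; cbn [nth]; rewrite by_kind2 hk.
  + rewrite /tor_prems !nthc_code; cbn [nth]; rewrite by_kind2 !catc_pickle decode_consc.
    by move=> x; rewrite inE => /eqP ->.
have [sg [mm def_a]] := sint_surj a; have [kA hkA] := proj1 (fA_enum a) hA; subst a.
apply: (@derivable_rule _ _ _
  (code [:: 3; l; pickle u; pickle c'; pickle s; pickle c; sg; mm; kA])).
- by rewrite /tor_concl !nthc_code; cbn [nth]; rewrite (by_kind3 0) !catc_pickle.
- rewrite /tor_ok !nthc_code; cbn [nth]; rewrite (by_kind3 0) -pickle_sint.
  by rewrite !nandE !neq0_bool hkA !isword_pickle.
rewrite /tor_prems !nthc_code; cbn [nth]; rewrite (by_kind3 0) !decode_consc.
rewrite catc_pickle -absz_sint powc_pickle.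
by move=> x; rewrite !inE => /or3P [] /eqP ->.
Qed.

End TorsionRules.

(** * Recursive enumerability of the torsion sets *)

Section WordsOver.
Variable fX : nat -> nat.

Definition wover ec c := ball (lenc c) (fun m => neq (fX (nthc ec m)) (nthc (nthc c m) 0).+1).

Lemma word_over_wover (w : word) : word_over fX w <-> exists ec, wover ec (pickle w) != 0.
Proof.
have woverP ks : wover (code ks) (pickle w) != 0 <->
    forall m, m < size w -> fX (nth 0 ks m) = (nth (0, false) w m).1.+1.
  rewrite /wover pickle_word lenc_code size_map; split => [/ballP h m hm | h].
    have := h m hm; rewrite !nthc_code (nth_map (0, false)) // nthc_code.
    by rewrite neqE neq0_bool => /eqP.
  apply/ballP => m hm; rewrite !nthc_code (nth_map (0, false)) // nthc_code neqE h //.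
  by cbn [nth]; rewrite eqxx.
split => [hw | [ec]].
  suff [ks hks] : exists ks, forall m, m < size w -> fX (nth 0 ks m) = (nth (0, false) w m).1.+1.
    by exists (code ks); apply/woverP.
  elim: w hw {woverP} => [|l w IH] hw; first by exists [::].
  have [k hk] := hw l (mem_head _ _).
  have [ks hks] : exists ks, forall m, m < size w -> fX (nth 0 ks m) = (nth (0, false) w m).1.+1.
    by apply: IH => l' hl'; apply: hw; rewrite in_cons hl' orbT.
  by exists (k :: ks) => -[|m] //= hm; apply: hks.
rewrite -[ec]CodeSeq.decodeK => /woverP h l hl.
by exists (nth 0 (decode ec) (index l w)); rewrite h ?index_mem // nth_index.
Qed.

End WordsOver.

(* k codes a derivation certificate together with the indices in the enumeration of X of
   the letters of the word. *)
Definition tor_check fX fR fA k i c :=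
  nand (certc tor_concl tor_prems (tor_ok fR fA) (nthc k 0) (pairc i c)) (wover fX (nthc k 1) c).

Lemma TA_tor_check fX fR fA A i w : (forall a, A a <-> exists k, fA k (pickle a) != 0) ->
  TA fX fR A i w <-> exists k, tor_check fX fR fA k i (pickle w) != 0.
Proof.
move=> fA_enum; have Tor_cert : TorAn (pres_eq fR) cat winv [::] A i w <->
    exists c, certc tor_concl tor_prems (tor_ok fR fA) c (pairc i (pickle w)) != 0.
  rewrite -derivable_certc; split => [/Der_complete /(Der_tor_derivable fA_enum) // | ].
  by case/(tor_derivable_sound fA_enum) => l [w' [/pairc_pickle_inj [-> ->]]] /Der_Tor.
rewrite /TA word_over_wover Tor_cert /tor_check; split => [[[ec hec] [c hc]] | [k]].
  by exists (code [:: c; ec]); rewrite !nthc_code nandE hc hec.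
by rewrite nandE neq0_bool => /andP [hc hec]; split; [exists (nthc k 1) | exists (nthc k 0)].
Qed.

Lemma tor_check_pr fA {fA_pr : PR2 fA} : prfun 3 (fun os xs =>
  tor_check (oracle 0 os) (oracle 1 os) fA (nth 0 xs 0) (nth 0 xs 1) (nth 0 xs 2)).
Proof.
rewrite /tor_check /wover /certc /tor_concl /tor_prems /tor_ok /elem_ok /by_kind.
prfun_solve.
Qed.

Theorem lemma2p7 (A : int -> Prop) (hA : re_int_set A) :
  (exists t : pr, forall (fX fR : nat -> nat),
      computable_fun fX -> computable_fun fR -> wf_presentation fX fR ->
      forall (i : nat) (w : word),
        TA fX fR A i w <-> exists k, pr_eval [:: fX; fR] t [:: k; i; pickle w] != 0)
  /\
  (forall (fX fR : nat -> nat),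
      computable_fun fX -> computable_fun fR -> wf_presentation fX fR ->
      (exists t : pr, forall w : word,
          (exists i, TA fX fR A i w) <-> exists k, pr_eval [::] t [:: k; pickle w] != 0)
      /\
      (forall w : word, (exists i, TA fX fR A i w) <-> TAomega_set fX fR A w)).
Proof.
have [tA fA_enum] := hA; pose fA k a := pr_eval [::] tA [:: k; a].
have fA_pr : PR2 fA by apply: prfun_ext (prfun_closed tA 2) => _ [|k [|a []]].
have [t ht] := tor_check_pr (fA := fA).
have TA_eval fX fR i w :
    TA fX fR A i w <-> exists k, pr_eval [:: fX; fR] t [:: k; i; pickle w] != 0.
  apply: iff_trans (TA_tor_check (fA := fA) fX fR i w fA_enum) _.
  by split => -[k hk]; exists k; [rewrite ht | rewrite ht in hk].
split; first by exists t => fX fR _ _ _; apply: TA_eval.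
move=> fX fR [tX hX] [tR hR] _; split; last first.
  by move=> w; split => [[i [hw hi]] | [hw [i hi]]]; [split => //; exists i | exists i].
have [t' ht'] : prfun 2 (fun os xs =>
    pr_eval os t [:: nthc (nth 0 xs 0) 0; nthc (nth 0 xs 0) 1; nth 0 xs 1]).
  by apply: prfun_pr_eval; do !apply: prvec_cons => //; prfun_solve.
have eval_t' xs : pr_eval [::] (osubst [:: tX; tR] t') xs = pr_eval [:: fX; fR] t' xs.
  by apply: pr_eval_osubst => -[|[|j]] n; rewrite /= ?hX ?hR // /oracle !nth_nil.
exists (osubst [:: tX; tR] t') => w; split => [[i /TA_eval [k hk]] | [k]].
  by exists (code [:: k; i]); rewrite eval_t' ht' // !nthc_code.
by rewrite eval_t' ht' // => hk; exists (nthc k 1); apply/TA_eval; exists (nthc k 0).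
Qed.
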